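(* Consider timing binary modulation with $T_b=1/R$: a transmitter molecule released at $s\in\{0,T_b/2\}$ (equiprobable bits) arrives at $s+t(r_\ell)$; let $z=z_{T_b/2}$ be the number of interfering molecules arriving in $[0,T_b/2]$, independent of $s$ and of $t(r_\ell)$, with mean $\mu$ and variance $\sigma^2>0$. For an integer $n\ge0$, the receiver decides $s=0$ iff the $(n+1)$th arriving molecule (counting interfering molecules and the transmitter's molecule) arrives no later than $T_b/2$. Let $\hat P_{b,\ell}=\frac12\Pr\{t(r_\ell)>T_b/2\}$ and assume $\hat P_{b,\ell}<\frac12$. Then the bit error rate is exactly $$P^\star_{b,\ell}(n)=\hat P_{b,\ell}\Pr\{z=n\}+\tfrac12\big(1-\Pr\{z=n\}\big).$$ If $\Pr\{z=n\}$ is replaced by the continuity-corrected Gaussian approximation $\Pr\{n-\tfrac12<Z<n+\tfrac12\}$ with $Z\sim\mathcal{N}(\mu,\sigma^2)$, the resulting expression, viewed as a function of real $n$, is minimized at $n=\mu$, with minimum value $$\frac12\Big[1+\big(2\hat P_{b,\ell}-1\big)\Big(1-2Q\Big(\frac{1}{2\sigma}\Big)\Big)\Big].$$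
   Context: $Q(x)=\frac{1}{\sqrt{2\pi}}\int_x^\infty e^{-u^2/2}du$ is the Gaussian tail function. $t(r_\ell)$ denotes the first passage time of the transmitter's molecule to the receiver, a positive random variable independent of $s$; with release time $T_b/2$ the molecule arrives strictly after $T_b/2$. *)

From Stdlib Require Import Reals Lra ClassicalEpsilon.
Open Scope R_scope.

(* Total definite integral: the Riemann integral of f on [a,b] when f is
   Riemann integrable there, 0 otherwise (the value is irrelevant then). *)
Definition RInt (f : R -> R) (a b : R) : R :=
  match excluded_middle_informative
          (exists v : R, exists pr : Riemann_integrable f a b, RiemannInt pr = v) with
  | left h => proj1_sig (constructive_indefinite_description _ h)
  | right _ => 0
  end.

Definition lim_at_infty (F : R -> R) (l : R) : Prop :=
  forall eps, 0 < eps -> exists B, forall b, B <= b -> Rabs (F b - l) < eps.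

Definition std_gauss (u : R) : R := / sqrt (2 * PI) * exp (- (u ^ 2) / 2).

Definition Qfun (x : R) : R :=
  match excluded_middle_informative
          (exists l, lim_at_infty (fun b => RInt std_gauss x b) l) with
  | left h => proj1_sig (constructive_indefinite_description _ h)
  | right _ => 0
  end.

Definition normal_pdf (mu sigma x : R) : R :=
  / (sigma * sqrt (2 * PI)) * exp (- ((x - mu) ^ 2) / (2 * sigma ^ 2)).

Definition gauss_prob (mu sigma a b : R) : R := RInt (normal_pdf mu sigma) a b.

Definition ind (b : bool) : R := if b then 1 else 0.

(* Model of the timing-modulation receiver.
   z = number of interfering molecules in [0,Tb/2], with pmf pz, independent of
   s and of t(r_l).  q = Pr{t(r_l) > Tb/2}.  s uniform on {0, Tb/2}.
   Number of molecules arriving in [0,Tb/2]: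
     s = 0    : z + 1[t <= Tb/2]
     s = Tb/2 : z        (transmitter molecule arrives strictly after Tb/2)
   Decide s = 0 iff the (n+1)th arrival is no later than Tb/2, i.e. iff the
   count in [0,Tb/2] is >= n+1.
   err_given_z n q k = Pr{error | z = k}. *)
Definition err_given_z (n : nat) (q : R) (k : nat) : R :=
  / 2 * ( q * ind (Nat.leb k n)                (* s=0, molecule late: count k *)
        + (1 - q) * ind (Nat.leb (S k) n) )    (* s=0, molecule on time: count k+1 *)
  + / 2 * ind (Nat.leb (S n) k).               (* s=Tb/2: count k, error iff k >= n+1 *)

Definition bit_error_rate (pz : nat -> R) (q : R) (n : nat) (v : R) : Prop :=
  infinite_sum (fun k => pz k * err_given_z n q k) v.

(* Given z = k, the number of molecules seen in [0, Tb/2] is k or k + 1 when s = 0 and k when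
   s = Tb/2.  For k <> n the decision is therefore wrong for exactly one of the two symbols, while
   for k = n it is wrong only when s = 0 and the molecule is late; averaging over z gives the exact
   bit error rate.  The Gaussian surrogate equals 1/2 + (Phat - 1/2) Pr{x - 1/2 < Z < x + 1/2}, so
   for Phat < 1/2 it is minimal where a unit window carries the most normal mass, namely when it is
   centred at mu (the density decreases away from mu); that mass is 1 - 2 Q(1/(2 sigma)). *)

From Pilot Require Import Defs.
From Stdlib Require Import Reals Lra Lia ClassicalEpsilon.
From Coquelicot Require Coquelicot.
From mathcomp Require all_boot all_order all_algebra all_classical all_reals all_analysis.
From mathcomp Require Rstruct Rstruct_topology.
Open Scope R_scope.

Module GaussIntegral.
Import all_boot all_order all_algebra all_classical all_reals all_analysis.
Import Rstruct Rstruct_topology.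
Import Order.TTheory GRing.Theory Num.Theory numFieldNormedType.Exports.
Local Open Scope classical_set_scope.
Local Open Scope ring_scope.

Lemma dnbhs_Rabs {x : R} {P : R -> Prop} : x^' P ->
  exists e : R, (0 < e)%coqR /\ forall y, y <> x -> (Rabs (y - x) < e)%coqR -> P y.
Proof.
move=> xP; have /nbhs_ballP[e /= e0 He] : nbhs x (fun y => y != x -> P y) := xP.
exists e; split; first exact/RltP.
move=> y yx /RltP ye; apply: He; last exact/eqP.
by rewrite /ball /= distrC -RabsE.
Qed.

Lemma derivable_pt_lim_derive1 {f : R -> R} {x : R} :
  derivable (f : R^o -> R^o) x 1 -> derivable_pt_lim f x (derive1 (f : R^o -> R^o) x).
Proof.
rewrite /derivable derive1E => /cvgrPdist_lt df eps /RltP eps0.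
have [d [d0 Hd]] := dnbhs_Rabs (df eps eps0).
exists (mkposreal d d0) => h h0 hd.
have := Hd h h0; rewrite Rminus_0_r => /(_ hd) /RltP.
by rewrite -RabsE Rabs_minus_sym /derive /GRing.scale /= mulr1 (addrC h x) RdivE // mulrC.
Qed.

Lemma Ratan_atan (x : R) : Ratan.atan x = atan x.
Proof.
pose D y := (atan y - Ratan.atan y)%coqR.
have dD y : derivable_pt_lim D y 0.
  have [d1 d2] := is_derive1_atan y.
  have := derivable_pt_lim_minus _ _ _ _ _ (derivable_pt_lim_derive1 d1)
    (Ratan.derivable_pt_lim_atan y).
  by rewrite derive1E d2 RpowE RinvE RplusE RminusE subrr.
have := MVT.null_derivative_1 D (fun y => exist _ 0 (dD y)) (fun y => erefl) x 0.
by rewrite /D atan0 Ratan.atan_0 Rminus_0_r => /Rminus_diag_uniq.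
Qed.

Lemma pi_PI : pi = PI :> R.
Proof.
have := @atan1 R; rewrite -Ratan_atan Ratan.atan_1 -(INRE 4) => h.
change (PI / 4 = pi * / INR 4)%coqR in h; simpl in h; lra.
Qed.

(* The Lebesgue integral of [exp (- t ^ 2)] over [0, x]. *)
Definition gauss_integral0 (x : R) : R := gauss_integral_proof.integral0_gauss x.

Lemma integrable_itv_continuous (a b : R) (f : R -> R) : continuous f ->
  lebesgue_measure.-integrable `[a, b] (EFin \o f).
Proof.
move=> cf; apply: continuous_compact_integrable; first exact: segment_compact.
exact: continuous_subspaceT.
Qed.

Lemma gauss_integral0_ge0 (x : R) : (0 <= gauss_integral0 x)%coqR.
Proof. exact/RleP/gauss_integral_proof.integral0_gauss_ge0. Qed.

Lemma gauss_integral0_le (x : R) : (0 < x)%coqR -> (gauss_integral0 x <= x)%coqR.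
Proof.
move=> /RltP x0; apply/RleP.
have Ex : \int[lebesgue_measure]_(t in `[0, x]) cst 1 t = x.
  rewrite Rintegral_cst //.
  have := @lebesgue_measure_itv R `[0, x]; rewrite /= lte_fin x0 => ->.
  by rewrite /= subr0 mul1r.
rewrite -[leRHS]Ex; apply: le_Rintegral => //.
- exact: integrable_itv_continuous continuous_gauss_fun.
- by apply: integrable_itv_continuous => ?; exact: cvg_cst.
- by move=> t _; exact: gauss_fun_le1.
Qed.

Lemma derivable_pt_lim_gauss_integral0 (x : R) : (0 < x)%coqR ->
  derivable_pt_lim gauss_integral0 x (exp (- x ^ 2)).
Proof.
move=> /RltP x0.
have [dF dFE] : derivable (gauss_integral0 : R^o -> R^o) x 1 /\
    derive1 (gauss_integral0 : R^o -> R^o) x = gauss_fun x.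
  apply: (@continuous_FTC1 R gauss_fun (BLeft 0) _ (x + 1)).
  - by rewrite ltrDl.
  - exact: integrable_itv_continuous continuous_gauss_fun.
  - by rewrite /= lte_fin.
  - by move=> ?; exact: continuous_gauss_fun.
by have := derivable_pt_lim_derive1 dF; rewrite dFE RexpE RpowE RoppE.
Qed.

Lemma gauss_integral0_sqr_lim :
  lim_at_infty (fun b => gauss_integral0 b * gauss_integral0 b)%coqR (PI / 4)%coqR.
Proof.
move=> eps /RltP eps0.
have /cvgrPdist_lt/(_ eps eps0)[M [_ HM]] := @gauss_integral_proof.cvg_integral0_gauss_sqr R.
exists (M + 1) => b /RleP Mb; apply/RltP.
rewrite RabsE RminusE RmultE RdivE distrC -pi_PI -expr2.
have -> : 4%coqR = 4 :> R by rewrite -INRE /=; lra.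
by apply: HM; apply: lt_le_trans Mb; rewrite ltrDl.
Qed.

End GaussIntegral.

Import Coquelicot.Coquelicot.

Lemma err_given_z_eq n q k :
  err_given_z n q k = / 2 + (q / 2 - / 2) * (if Nat.eqb k n then 1 else 0).
Proof.
  unfold err_given_z.
  destruct (Nat.eqb_spec k n), (Nat.leb_spec k n), (Nat.leb_spec (S k) n),
    (Nat.leb_spec (S n) k); try lia; unfold Defs.ind; lra.
Qed.

Lemma sum_f_R0_indicator (n m : nat) (c : R) :
  sum_f_R0 (fun k => if Nat.eqb k n then c else 0) m = if Nat.ltb m n then 0 else c.
Proof.
  induction m as [|m IH]; cbn [sum_f_R0].
  - destruct n; reflexivity.
  - rewrite IH. destruct (Nat.ltb_spec m n), (Nat.ltb_spec (S m) n),
      (Nat.eqb_spec (S m) n); lia || ring.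
Qed.

Lemma infinite_sum_indicator (n : nat) (c : R) :
  infinite_sum (fun k => if Nat.eqb k n then c else 0) c.
Proof.
  intros eps eps_pos. exists n. intros m hm.
  rewrite sum_f_R0_indicator. destruct (Nat.ltb_spec m n); [lia|].
  unfold Rdist. rewrite Rminus_diag, Rabs_R0. exact eps_pos.
Qed.

Lemma bit_error_rate_eq (pz : nat -> R) q n : infinite_sum pz 1 ->
  bit_error_rate pz q n (q / 2 * pz n + / 2 * (1 - pz n)).
Proof.
  intros pz_sum. apply is_series_Reals in pz_sum.
  pose proof (proj2 (is_series_Reals _ _) (infinite_sum_indicator n (pz n))) as pz_n.
  apply is_series_Reals.
  replace (q / 2 * pz n + / 2 * (1 - pz n)) with (/ 2 * 1 + (q / 2 - / 2) * pz n) by ring.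
  eapply is_series_ext;
    [| exact (is_series_plus _ _ _ _ (is_series_scal_l (/ 2) _ _ pz_sum)
                                     (is_series_scal_l (q / 2 - / 2) _ _ pz_n))].
  intros k. unfold plus, scal; simpl. unfold mult; simpl.
  rewrite err_given_z_eq. destruct (Nat.eqb_spec k n); [subst |]; ring.
Qed.

Lemma exp_le_compat x y : x <= y -> exp x <= exp y.
Proof. intros [lt | ->]; [left; apply exp_increasing, lt | right; reflexivity]. Qed.

Definition exp_neg_sqr (t : R) : R := exp (- t ^ 2).

Definition Phi0 (y : R) : R := RInt std_gauss 0 y.

Lemma continuous_std_gauss x : continuous std_gauss x.
Proof. apply (ex_derive_continuous (V := R_NormedModule)). unfold std_gauss. auto_derive. auto. Qed.

Lemma continuous_exp_neg_sqr x : continuous exp_neg_sqr x.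
Proof. apply (ex_derive_continuous (V := R_NormedModule)). unfold exp_neg_sqr. auto_derive. auto. Qed.

Lemma continuous_normal_pdf mu sigma x : continuous (normal_pdf mu sigma) x.
Proof. apply (ex_derive_continuous (V := R_NormedModule)). unfold normal_pdf. auto_derive. auto. Qed.

Lemma ex_RInt_std_gauss a b : ex_RInt std_gauss a b.
Proof. apply (ex_RInt_continuous (V := R_CompleteNormedModule)). intros. apply continuous_std_gauss. Qed.

Lemma ex_RInt_exp_neg_sqr a b : ex_RInt exp_neg_sqr a b.
Proof. apply (ex_RInt_continuous (V := R_CompleteNormedModule)). intros. apply continuous_exp_neg_sqr. Qed.

Lemma Defs_RInt_continuous (f : R -> R) a b :
  (forall x, continuous f x) -> Defs.RInt f a b = RInt f a b.
Proof.
  intros f_cont.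
  assert (pr : Riemann_integrable f a b)
    by apply ex_RInt_Reals_0, (ex_RInt_continuous (V := R_CompleteNormedModule)), (fun x _ => f_cont x).
  unfold Defs.RInt. destruct excluded_middle_informative as [h|h].
  - destruct (constructive_indefinite_description _ h) as [v [pr' <-]]; simpl.
    symmetry. apply RInt_Reals.
  - exfalso. apply h. exists (RiemannInt pr), pr. reflexivity.
Qed.

Lemma lim_at_infty_is_lim F l : lim_at_infty F l <-> is_lim F p_infty l.
Proof.
  rewrite <- is_lim_spec. split.
  - intros H eps. destruct (H eps (cond_pos eps)) as [B HB].
    exists B. intros b hb. apply HB. lra.
  - intros H eps eps_pos. destruct (H (mkposreal eps eps_pos)) as [B HB].
    exists (B + 1). intros b hb. apply HB. lra.
Qed.

(* The FTC applies only away from 0, where the MathComp derivative is one-sided;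
   on [0, e] both sides are at most e. *)
Lemma Rabs_RInt_exp_neg_sqr_sub_gauss_integral0_le b e : 0 < e < b ->
  Rabs (RInt exp_neg_sqr 0 b - GaussIntegral.gauss_integral0 b) <= 2 * e.
Proof.
  intros [e_pos e_b]. set (F := GaussIntegral.gauss_integral0).
  assert (FTC : RInt exp_neg_sqr e b = F b - F e).
  { apply is_RInt_unique, (is_RInt_derive F exp_neg_sqr).
    - intros x hx. apply is_derive_Reals, GaussIntegral.derivable_pt_lim_gauss_integral0.
      rewrite Rmin_left in hx; lra.
    - intros x _. apply continuous_exp_neg_sqr. }
  assert (RInt_small : Rabs (RInt exp_neg_sqr 0 e) <= (e - 0) * 1).
  { apply abs_RInt_le_const; [lra | apply ex_RInt_exp_neg_sqr |].
    intros t _. unfold exp_neg_sqr. rewrite Rabs_pos_eq, <- exp_0 by apply Rlt_le, exp_pos.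
    apply exp_le_compat. pose proof (pow2_ge_0 t). lra. }
  pose proof (GaussIntegral.gauss_integral0_ge0 e) as F_ge0.
  pose proof (GaussIntegral.gauss_integral0_le e e_pos) as F_le. fold F in F_ge0, F_le.
  rewrite <- (RInt_Chasles exp_neg_sqr 0 e b) by apply ex_RInt_exp_neg_sqr.
  change (plus ?x ?y) with (x + y). rewrite FTC.
  replace (RInt exp_neg_sqr 0 e + (F b - F e) - F b) with (RInt exp_neg_sqr 0 e + - F e) by ring.
  eapply Rle_trans; [apply Rabs_triang |].
  rewrite Rabs_Ropp, (Rabs_pos_eq (F e)) by exact F_ge0. lra.
Qed.

Lemma RInt_exp_neg_sqr_gauss_integral0 b :
  0 < b -> RInt exp_neg_sqr 0 b = GaussIntegral.gauss_integral0 b.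
Proof.
  intros b_pos.
  apply Rminus_diag_uniq, Rabs_eq_0, Rle_antisym; [| apply Rabs_pos].
  apply Rle_plus_epsilon. intros eps eps_pos.
  assert (0 < Rmin (b / 2) (eps / 2)) by (apply Rmin_glb_lt; lra).
  pose proof (Rmin_l (b / 2) (eps / 2)). pose proof (Rmin_r (b / 2) (eps / 2)).
  pose proof (Rabs_RInt_exp_neg_sqr_sub_gauss_integral0_le b (Rmin (b / 2) (eps / 2))
    ltac:(lra)). lra.
Qed.

Lemma is_lim_RInt_exp_neg_sqr :
  is_lim (fun b => RInt exp_neg_sqr 0 b) p_infty (sqrt PI / 2).
Proof.
  apply is_lim_ext_loc with
    (fun b => sqrt (GaussIntegral.gauss_integral0 b * GaussIntegral.gauss_integral0 b)).
  { exists 0. intros b b_pos.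
    rewrite sqrt_square by apply GaussIntegral.gauss_integral0_ge0.
    symmetry. apply RInt_exp_neg_sqr_gauss_integral0, b_pos. }
  replace (sqrt PI / 2) with (sqrt (PI / 4)).
  - apply is_lim_comp_continuous; [| apply continuous_sqrt].
    apply lim_at_infty_is_lim, GaussIntegral.gauss_integral0_sqr_lim.
  - rewrite sqrt_div_alt by lra. replace 4 with (2 * 2) by ring.
    rewrite sqrt_square by lra. reflexivity.
Qed.

Lemma std_gauss_exp_neg_sqr y :
  std_gauss y = / sqrt PI * (/ sqrt 2 * exp_neg_sqr (/ sqrt 2 * y + 0)).
Proof.
  unfold std_gauss, exp_neg_sqr.
  rewrite sqrt_mult, Rinv_mult by (lra || apply Rlt_le, PI_RGT_0).
  rewrite Rplus_0_r, Rpow_mult_distr, pow_inv, pow2_sqrt by lra.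
  replace (- (/ 2 * y ^ 2)) with (- y ^ 2 / 2) by field. ring.
Qed.

Lemma Phi0_exp_neg_sqr y : Phi0 y = / sqrt PI * RInt exp_neg_sqr 0 (y / sqrt 2).
Proof.
  pose proof (sqrt_lt_R0 2 ltac:(lra)) as sqrt2_pos.
  unfold Phi0.
  rewrite (RInt_ext _
    (fun t => scal (/ sqrt PI) (scal (/ sqrt 2) (exp_neg_sqr (/ sqrt 2 * t + 0)))))
    by (intros t _; apply std_gauss_exp_neg_sqr).
  pose proof (ex_RInt_exp_neg_sqr (/ sqrt 2 * 0 + 0) (/ sqrt 2 * y + 0)) as ex_lin.
  rewrite (RInt_scal (V := R_CompleteNormedModule)), (RInt_comp_lin (V := R_CompleteNormedModule))
    by (exact ex_lin || exact (ex_RInt_comp_lin (V := R_CompleteNormedModule) _ _ _ _ _ ex_lin)).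
  unfold scal; simpl; unfold mult; simpl.
  do 2 f_equal; field; lra.
Qed.

Lemma Rbar_mult_p_infty_pos a : 0 < a -> Rbar_mult p_infty a = p_infty.
Proof.
  intros a_pos. simpl. destruct Rle_dec as [le | not_le]; [| lra].
  destruct Rle_lt_or_eq_dec; [reflexivity | lra].
Qed.

Lemma is_lim_Phi0 : is_lim Phi0 p_infty (/ 2).
Proof.
  pose proof (sqrt_lt_R0 2 ltac:(lra)) as sqrt2_pos.
  pose proof (sqrt_lt_R0 PI PI_RGT_0) as sqrtPI_pos.
  apply is_lim_ext with (fun y => / sqrt PI * RInt exp_neg_sqr 0 (y / sqrt 2)).
  { intros y. symmetry. apply Phi0_exp_neg_sqr. }
  replace (Finite (/ 2)) with (Rbar_mult (/ sqrt PI) (sqrt PI / 2))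
    by (simpl; f_equal; field; lra).
  apply is_lim_scal_l.
  apply (is_lim_comp (fun b => RInt exp_neg_sqr 0 b) (fun y => y / sqrt 2) _ _ p_infty).
  - apply is_lim_RInt_exp_neg_sqr.
  - replace p_infty with (Rbar_mult p_infty (/ sqrt 2)) at 2.
    + apply is_lim_scal_r, is_lim_id.
    + apply Rbar_mult_p_infty_pos, Rinv_0_lt_compat, sqrt2_pos.
  - exists 0. intros y _. discriminate.
Qed.

Lemma RInt_std_gauss a b : RInt std_gauss a b = Phi0 b - Phi0 a.
Proof.
  unfold Phi0.
  pose proof (RInt_Chasles std_gauss 0 a b (ex_RInt_std_gauss _ _) (ex_RInt_std_gauss _ _)) as H.
  change (plus ?x ?y) with (x + y) in H. lra.
Qed.

Lemma Qfun_Phi0 c : Qfun c = / 2 - Phi0 c.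
Proof.
  assert (lim : lim_at_infty (fun b => Defs.RInt std_gauss c b) (/ 2 - Phi0 c)).
  { apply lim_at_infty_is_lim.
    apply is_lim_ext with (fun b => Phi0 b - Phi0 c).
    { intros b. rewrite Defs_RInt_continuous, RInt_std_gauss by apply continuous_std_gauss.
      reflexivity. }
    apply (is_lim_minus _ _ _ (/ 2) (Phi0 c)); [apply is_lim_Phi0 | apply is_lim_const |].
    reflexivity. }
  unfold Qfun. destruct excluded_middle_informative as [h | h]; [| exfalso; eauto].
  destruct (constructive_indefinite_description _ h) as [l lim_l]; simpl.
  apply lim_at_infty_is_lim, is_lim_unique in lim, lim_l.
  rewrite lim in lim_l. injection lim_l. auto.
Qed.

Lemma std_gauss_opp u : std_gauss (- u) = std_gauss u.
Proof. unfold std_gauss. replace ((- u) ^ 2) with (u ^ 2) by ring. reflexivity. Qed.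

Lemma Phi0_opp y : Phi0 (- y) = - Phi0 y.
Proof.
  unfold Phi0.
  replace (RInt std_gauss 0 (- y)) with (RInt std_gauss (-1 * 0 + 0) (-1 * y + 0)) by (f_equal; ring).
  rewrite <- (RInt_comp_lin (V := R_CompleteNormedModule)) by apply ex_RInt_std_gauss.
  rewrite (RInt_ext _ (fun t => scal (-1) (std_gauss t))).
  - rewrite (RInt_scal (V := R_CompleteNormedModule)) by apply ex_RInt_std_gauss.
    unfold scal; simpl; unfold mult; simpl. ring.
  - intros t _. replace (-1 * t + 0) with (- t) by ring. rewrite std_gauss_opp. reflexivity.
Qed.

Lemma RInt_std_gauss_shift v a b :
  RInt (fun t => std_gauss (t + v)) a b = Phi0 (b + v) - Phi0 (a + v).
Proof.
  rewrite <- RInt_std_gauss.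
  replace (a + v) with (1 * a + v) by ring. replace (b + v) with (1 * b + v) by ring.
  rewrite <- (RInt_comp_lin (V := R_CompleteNormedModule)) by apply ex_RInt_std_gauss.
  apply RInt_ext. intros t _. unfold scal; simpl; unfold mult; simpl.
  rewrite !Rmult_1_l. reflexivity.
Qed.

Lemma std_gauss_shift_le t c : 0 <= t -> 0 <= c -> std_gauss (t + c) <= std_gauss (t + - c).
Proof.
  intros t_ge0 c_ge0. unfold std_gauss. apply Rmult_le_compat_l.
  - apply Rlt_le, Rinv_0_lt_compat, sqrt_lt_R0. pose proof PI_RGT_0. lra.
  - apply exp_le_compat. nra.
Qed.

Lemma Phi0_window_le b c : 0 < c -> Phi0 (b + c) - Phi0 (b - c) <= Phi0 c - Phi0 (- c).
Proof.
  intros c_pos.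
  assert (window_nonneg : forall b, 0 <= b -> Phi0 (b + c) - Phi0 (b - c) <= Phi0 c - Phi0 (- c)).
  { clear b. intros b b_ge0.
    assert (H : RInt (fun t => std_gauss (t + c)) 0 b <= RInt (fun t => std_gauss (t + - c)) 0 b).
    { apply RInt_le; [exact b_ge0 | | | intros t [t_ge0 _]; apply std_gauss_shift_le; lra];
        apply (ex_RInt_continuous (V := R_CompleteNormedModule)); intros;
        apply (ex_derive_continuous (V := R_NormedModule)); unfold std_gauss; auto_derive; auto. }
    rewrite !RInt_std_gauss_shift in H.
    replace (0 + c) with c in H by ring. replace (0 + - c) with (- c) in H by ring.
    replace (b + - c) with (b - c) in H by ring. lra. }
  destruct (Rle_or_lt 0 b) as [b_ge0 | b_neg]; [auto |].
  replace (Phi0 (b + c) - Phi0 (b - c)) with (Phi0 (- b + c) - Phi0 (- b - c)).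
  - apply window_nonneg. lra.
  - replace (- b + c) with (- (b - c)) by ring. replace (- b - c) with (- (b + c)) by ring.
    rewrite !Phi0_opp. ring.
Qed.

Lemma normal_pdf_std_gauss mu sigma x : 0 < sigma ->
  normal_pdf mu sigma x = / sigma * std_gauss (/ sigma * x + - mu / sigma).
Proof.
  intros sigma_pos. unfold normal_pdf, std_gauss.
  rewrite Rinv_mult, Rmult_assoc. do 3 f_equal. field. lra.
Qed.

Lemma gauss_prob_Phi0 mu sigma a b : 0 < sigma ->
  gauss_prob mu sigma a b = Phi0 ((b - mu) / sigma) - Phi0 ((a - mu) / sigma).
Proof.
  intros sigma_pos. unfold gauss_prob.
  rewrite Defs_RInt_continuous by apply continuous_normal_pdf.
  replace ((a - mu) / sigma) with (/ sigma * a + - mu / sigma) by (field; lra).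
  replace ((b - mu) / sigma) with (/ sigma * b + - mu / sigma) by (field; lra).
  rewrite <- RInt_std_gauss, <- (RInt_comp_lin (V := R_CompleteNormedModule)) by apply ex_RInt_std_gauss.
  apply RInt_ext. intros x _. apply normal_pdf_std_gauss, sigma_pos.
Qed.

Lemma gauss_prob_unit_window mu sigma x : 0 < sigma ->
  gauss_prob mu sigma (x - / 2) (x + / 2)
  = Phi0 ((x - mu) / sigma + / (2 * sigma)) - Phi0 ((x - mu) / sigma - / (2 * sigma)).
Proof.
  intros sigma_pos. rewrite gauss_prob_Phi0 by exact sigma_pos.
  f_equal; f_equal; field; lra.
Qed.

Lemma gauss_prob_unit_window_le mu sigma x : 0 < sigma ->
  gauss_prob mu sigma (x - / 2) (x + / 2) <= gauss_prob mu sigma (mu - / 2) (mu + / 2).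
Proof.
  intros sigma_pos. rewrite !gauss_prob_unit_window by exact sigma_pos.
  replace ((mu - mu) / sigma) with 0 by (field; lra). rewrite Rplus_0_l, Rminus_0_l.
  apply Phi0_window_le, Rinv_0_lt_compat. lra.
Qed.

Lemma gauss_prob_centered_unit_window mu sigma : 0 < sigma ->
  gauss_prob mu sigma (mu - / 2) (mu + / 2) = 1 - 2 * Qfun (1 / (2 * sigma)).
Proof.
  intros sigma_pos. rewrite gauss_prob_unit_window by exact sigma_pos.
  replace ((mu - mu) / sigma) with 0 by (field; lra).
  replace (1 / (2 * sigma)) with (/ (2 * sigma)) by (field; lra).
  rewrite Rplus_0_l, Rminus_0_l, Phi0_opp, Qfun_Phi0. field.
Qed.

Theorem theorem6
  (pz : nat -> R) (q mu sigma : R)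
  (pz_nonneg : forall k, 0 <= pz k)
  (pz_sum : infinite_sum pz 1)
  (pz_mean : infinite_sum (fun k => INR k * pz k) mu)
  (pz_var : infinite_sum (fun k => (INR k - mu) ^ 2 * pz k) (sigma ^ 2))
  (sigma_pos : 0 < sigma)
  (q_range : 0 <= q <= 1)
  (Phat_lt : q / 2 < / 2) :
  let Phat := q / 2 in
  (forall n : nat,
     bit_error_rate pz q n (Phat * pz n + / 2 * (1 - pz n))) /\
  (let G := fun x : R =>
       Phat * gauss_prob mu sigma (x - / 2) (x + / 2)
       + / 2 * (1 - gauss_prob mu sigma (x - / 2) (x + / 2)) in
   (forall x : R, G mu <= G x) /\
   G mu = / 2 * (1 + (2 * Phat - 1) * (1 - 2 * Qfun (1 / (2 * sigma))))).
Proof.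
  (* The moment hypotheses on [pz] only motivate the Gaussian approximation. *)
  intros Phat. split.
  - intros n. apply bit_error_rate_eq, pz_sum.
  - intros G.
    assert (G_eq : forall x, G x = / 2 + (Phat - / 2) * gauss_prob mu sigma (x - / 2) (x + / 2))
      by (intros x; unfold G; ring).
    split.
    + intros x. rewrite !G_eq.
      pose proof (gauss_prob_unit_window_le mu sigma x sigma_pos).
      apply Rplus_le_compat_l, Rmult_le_compat_neg_l; [unfold Phat; lra | assumption].
    + rewrite G_eq, gauss_prob_centered_unit_window by exact sigma_pos. field.
Qed.
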